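(* Let $Q$ be a right power alternative loop and let $S\le Q$ be a subloop generated by one element (hence $S$ is a cyclic group). Then $Q$ has a left coset decomposition modulo $S$, i.e., any two left cosets $xS$, $yS$ ($x,y\in Q$) are either disjoint or equal.
   Context: A loop is power-associative if each element generates a group; a power-associative loop is right power alternative if $(xy^i)y^j=xy^{i+j}$ for all elements $x,y$ and all integers $i,j$. For $x\in Q$, $xS=\{xs:s\in S\}$. *)

From Stdlib Require Import ZArith.
Set Implicit Arguments.

Section Loops.
Variables (T : Type) (mul : T -> T -> T) (e : T) (ldiv rdiv : T -> T -> T).

(* A loop: quasigroup (unique solvability, via left/right division) with identity. *)
Definition is_loop : Prop :=
  (forall x, mul e x = x) /\ (forall x, mul x e = x) /\
  (forall x y, mul x (ldiv x y) = y) /\ (forall x y, ldiv x (mul x y) = y) /\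
  (forall x y, mul (rdiv y x) x = y) /\ (forall x y, rdiv (mul y x) x = y).

Definition subloop (P : T -> Prop) : Prop :=
  P e /\
  (forall x y, P x -> P y -> P (mul x y)) /\
  (forall x y, P x -> P y -> P (ldiv x y)) /\
  (forall x y, P x -> P y -> P (rdiv x y)).

Definition gen (A : T -> Prop) (z : T) : Prop :=
  forall P, subloop P -> (forall w, A w -> P w) -> P z.

Definition gen1 (a : T) : T -> Prop := gen (fun w => w = a).

Definition power_assoc : Prop :=
  forall x u v w, gen1 x u -> gen1 x v -> gen1 x w ->
    mul (mul u v) w = mul u (mul v w).

(* powers: y^0 = e, y^(n+1) = y^n * y, y^(-n) = inverse of y^n
   (inverse taken as e.g. ldiv z e; inside the cyclic group <y> this is the
   two-sided inverse) *)
Fixpoint npow (y : T) (n : nat) : T :=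
  match n with O => e | S n => mul (npow y n) y end.

Definition zpow (y : T) (i : Z) : T :=
  match i with
  | Z0 => e
  | Zpos p => npow y (Pos.to_nat p)
  | Zneg p => ldiv (npow y (Pos.to_nat p)) e
  end.

Definition right_power_alternative : Prop :=
  power_assoc /\
  forall x y (i j : Z), mul (mul x (zpow y i)) (zpow y j) = mul x (zpow y (i + j)).

Definition lcoset (x : T) (S : T -> Prop) (z : T) : Prop :=
  exists s, S s /\ z = mul x s.

End Loops.

(* In a right power alternative loop the powers of a form the cyclic subloop
   S = <a>, and right multiplication by a^i followed by a^j is right
   multiplication by a^(i+j).  Hence x a^i = y a^j forces x = y a^(j-i), and
   then xS = (y a^(j-i)) S = yS: two left cosets that meet coincide. *)
From Stdlib Require Import ZArith Classical.

Section CyclicCosets.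
Variables (T : Type) (mul : T -> T -> T) (e : T) (ldiv rdiv : T -> T -> T).
Hypothesis mul1l : forall x, mul e x = x.
Hypothesis mul1r : forall x, mul x e = x.
Hypothesis mulKl : forall x y, ldiv x (mul x y) = y.
Hypothesis mulKr : forall x y, rdiv (mul y x) x = y.

Variable a : T.
Let p := zpow mul e ldiv a.
Let S := gen1 mul e ldiv rdiv a.

Hypothesis mul_zpowA :
  forall x i j, mul (mul x (p i)) (p j) = mul x (p (i + j)%Z).

Lemma zpowD i j : mul (p i) (p j) = p (i + j)%Z.
Proof. rewrite <- (mul1l (p i)), mul_zpowA. apply mul1l. Qed.

Lemma mul_zpowK x i : mul (mul x (p i)) (p (- i)%Z) = x.
Proof. rewrite mul_zpowA, Z.add_opp_diag_r. apply mul1r. Qed.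

Lemma subloop_zpow_range : subloop mul e ldiv rdiv (fun z => exists i, z = p i).
Proof.
  repeat split.
  - exists 0%Z. reflexivity.
  - intros _ _ [i ->] [j ->]. exists (i + j)%Z. apply zpowD.
  - intros _ _ [i ->] [j ->]. exists (j - i)%Z.
    rewrite <- (mulKl (p i) (p (j - i)%Z)), zpowD, Zplus_minus. reflexivity.
  - intros _ _ [i ->] [j ->]. exists (i - j)%Z.
    rewrite <- (mulKr (p j) (p (i - j)%Z)) at 1. rewrite zpowD, Z.sub_add. reflexivity.
Qed.

Lemma gen1_zpow_range {z} : S z -> exists i, z = p i.
Proof.
  intros Sz. apply Sz; [apply subloop_zpow_range |].
  intros w ->. exists 1%Z. unfold p. simpl. rewrite mul1l. reflexivity.
Qed.

Lemma subloop_npow (P : T -> Prop) n :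
  subloop mul e ldiv rdiv P -> P a -> P (npow mul e a n).
Proof.
  intros (P1 & PM & _) Pa. induction n as [|n IHn]; simpl; auto.
Qed.

Lemma gen1_zpow i : S (p i).
Proof.
  intros P sP PA. assert (Pa : P a) by (apply PA; reflexivity).
  pose proof sP as (P1 & _ & PL & _).
  destruct i as [|q|q]; simpl.
  - exact P1.
  - apply subloop_npow; assumption.
  - apply PL; [apply subloop_npow |]; assumption.
Qed.

Lemma lcoset_gen1E x z : lcoset mul x S z <-> exists i, z = mul x (p i).
Proof.
  split.
  - intros (s & Ss & ->). destruct (gen1_zpow_range Ss) as [i ->]. exists i. reflexivity.
  - intros [i ->]. exists (p i). split; [apply gen1_zpow | reflexivity].
Qed.

Lemma lcoset_mul_zpow y k z :
  lcoset mul (mul y (p k)) S z <-> lcoset mul y S z.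
Proof.
  rewrite !lcoset_gen1E. split; intros [i ->].
  - exists (k + i)%Z. apply mul_zpowA.
  - exists (- k + i)%Z. rewrite mul_zpowA, Z.add_assoc, Z.add_opp_diag_r. reflexivity.
Qed.

Lemma lcoset_meet_eq x y z :
  lcoset mul x S z -> lcoset mul y S z ->
  forall w, lcoset mul x S w <-> lcoset mul y S w.
Proof.
  intros [i ->]%lcoset_gen1E [j Exy]%lcoset_gen1E w.
  assert (Ex : x = mul y (p (j - i)%Z)).
  { rewrite <- (mul_zpowK x i), Exy, mul_zpowA, Z.add_opp_r. reflexivity. }
  rewrite Ex. apply lcoset_mul_zpow.
Qed.

End CyclicCosets.

Theorem lemma5p2 (T : Type) (mul : T -> T -> T) (e : T) (ldiv rdiv : T -> T -> T)
  (HQ : is_loop mul e ldiv rdiv)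
  (Hrpa : right_power_alternative mul e ldiv rdiv)
  (a : T) :
  let S := gen1 mul e ldiv rdiv a in
  forall x y : T,
    (forall z, ~ (lcoset mul x S z /\ lcoset mul y S z)) \/
    (forall z, lcoset mul x S z <-> lcoset mul y S z).
Proof.
  destruct HQ as (mul1l & mul1r & _ & mulKl & _ & mulKr).
  destruct Hrpa as [_ mul_zpowA].
  intros S x y.
  destruct (classic (exists z, lcoset mul x S z /\ lcoset mul y S z))
    as [(z & xSz & ySz) | no_meet].
  - right. eapply lcoset_meet_eq; eauto.
  - left. intros z meet. apply no_meet. exists z. exact meet.
Qed.
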